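(* Every direct summand of a centrally endo-AIP module is a centrally endo-AIP module.
   Context: Modules are unitary right $R$-modules. For a module $M$ with $S=\mathrm{End}_R(M)$ and $N\le M$, $l_S(N)=\{\phi\in S:\phi(N)=0\}$. An ideal $I$ of $S$ is centrally s-unital if for every $a\in I$ there is $z\in I$ central in $S$ with $az=a$. $M$ is centrally endo-AIP if $l_S(N)$ is a centrally s-unital ideal of $S$ for every fully invariant submodule $N$ of $M$. *)

From HB Require Import structures.
From mathcomp Require Import all_boot all_algebra.
Set Implicit Arguments. Unset Strict Implicit. Unset Printing Implicit Defensive.
Import GRing.Theory.
Local Open Scope ring_scope.

(* Right R-modules are modelled as left modules over the converse ring R^c:
   for M : lmodType R^c, [r *: m] stands for m r. *)

(* Elements of S = End_R(M): R-linear self-maps of M.  The product in S is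
   composition: (phi psi)(x) = phi (psi x). *)
Definition endo (R : nzRingType) (M : lmodType R^c) (f : M -> M) : Prop :=
  linear f.

Definition submodule (R : nzRingType) (M : lmodType R^c) (N : M -> Prop) : Prop :=
  [/\ N 0,
      (forall x y, N x -> N y -> N (x + y)) &
      (forall (a : R^c) x, N x -> N (a *: x))].

Definition fully_invariant (R : nzRingType) (M : lmodType R^c) (N : M -> Prop) : Prop :=
  submodule N /\ (forall f : M -> M, endo f -> forall x, N x -> N (f x)).

Definition lS (R : nzRingType) (M : lmodType R^c) (N : M -> Prop) (f : M -> M) : Prop :=
  endo f /\ (forall x, N x -> f x = 0).

Definition central_endo (R : nzRingType) (M : lmodType R^c) (z : M -> M) : Prop :=
  endo z /\ (forall g : M -> M, endo g -> forall x, z (g x) = g (z x)).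

Definition endo_ideal (R : nzRingType) (M : lmodType R^c) (I : (M -> M) -> Prop) : Prop :=
  [/\ (forall f, I f -> endo f),
      I (fun _ => 0),
      (forall f g, I f -> I g -> I (fun x => f x - g x)),
      (forall f g, I f -> endo g -> I (fun x => g (f x))) &
      (forall f g, I f -> endo g -> I (fun x => f (g x)))].

Definition centrally_s_unital (R : nzRingType) (M : lmodType R^c)
    (I : (M -> M) -> Prop) : Prop :=
  forall a, I a -> exists z, [/\ I z, central_endo z & forall x, a (z x) = a x].

Definition centrally_endo_AIP (R : nzRingType) (M : lmodType R^c) : Prop :=
  forall N : M -> Prop, fully_invariant N ->
    endo_ideal (lS N) /\ centrally_s_unital (lS N).

From HB Require Import structures.
From mathcomp Require Import all_boot all_algebra.
From Stdlib Require Import IndefiniteDescription.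
Import GRing.Theory.
Local Open Scope ring_scope.

(* Write M = i(N) (+) K and let p : M -> N be the projection along K.  For a
   fully invariant L <= N, the set Y of those m with p (phi m) in L for every
   phi in End(M) is the largest fully invariant submodule of M that p maps
   into L.  An a in l(L) lifts to i a p in l(Y); a central unit Z for it in
   l(Y) compresses to p Z i, which kills L since i(L) <= Y, is central in
   End(N) since every g in End(N) lifts to i g p, and is a unit for a since i
   is injective. *)

Section LinearFunctions.
Variable R : pzRingType.
Implicit Types U V W : lmodType R.

Lemma linear_fun0 U V (f : U -> V) : linear f -> f 0 = 0.
Proof. by move=> hf; rewrite -[0 in LHS](subrr 0) (zmod_morphism_linear hf) subrr. Qed.

Lemma linear_funD U V (f : U -> V) : linear f -> {morph f : x y / x + y}.
Proof. by move=> hf x y; rewrite -[x in LHS]scale1r hf scale1r. Qed.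

Lemma linear_funZ U V (f : U -> V) : linear f -> forall a, {morph f : x / a *: x}.
Proof. by move=> hf a x; rewrite -[a *: x]addr0 hf linear_fun0 // addr0. Qed.

Lemma linear_comp U V W (f : U -> V) (g : V -> W) :
  linear f -> linear g -> linear (fun x => g (f x)).
Proof. by move=> hf hg a u v; rewrite /= hf hg. Qed.

Lemma linear_subfun U V (f g : U -> V) :
  linear f -> linear g -> linear (fun x => f x - g x).
Proof. by move=> hf hg a u v; rewrite /= hf hg scalerBr opprD addrACA. Qed.

Lemma linear_cst0 U V : linear (fun _ : U => 0 : V).
Proof. by move=> a u v; rewrite scaler0 addr0. Qed.

End LinearFunctions.

Lemma lS_endo_ideal (R : nzRingType) (M : lmodType R^c) (L : M -> Prop) :
  fully_invariant L -> endo_ideal (lS L).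
Proof.
move=> [_ L_inv]; split.
- by move=> f [].
- by split=> //; apply: linear_cst0.
- move=> f g [hf f0] [hg g0]; split; first exact: linear_subfun.
  by move=> x Lx; rewrite f0 // g0 // subrr.
- move=> f g [hf f0] hg; split; first exact: linear_comp.
  by move=> x Lx; rewrite f0 // linear_fun0.
- move=> f g [hf f0] hg; split; first exact: linear_comp.
  by move=> x Lx; rewrite f0 //; apply: L_inv.
Qed.

Section DirectSummand.
Variables (R : nzRingType) (M N : lmodType R^c) (i : N -> M) (K : M -> Prop).
Hypotheses (i_linear : linear i) (i_inj : injective i) (K_submodule : submodule K).
Hypothesis iK_eq0 : forall n, K (i n) -> i n = 0.
Hypothesis decomposition : forall m : M, exists n k, K k /\ m = i n + k.

Lemma decomposition_unique n n' k k' :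
  K k -> K k' -> i n + k = i n' + k' -> n = n'.
Proof.
have [_ KD KZ] := K_submodule; move=> Kk Kk' E.
have i_diff : i (n - n') = k' + (-1) *: k.
  rewrite (zmod_morphism_linear i_linear) scaleN1r -[i n](addrK k) E.
  by rewrite addrAC [i n' + k']addrC addrK.
have : i (n - n') = i 0.
  by rewrite linear_fun0 // iK_eq0 // i_diff; apply: KD => //; apply: KZ.
by move/i_inj/eqP; rewrite subr_eq0 => /eqP.
Qed.

Definition proj (m : M) : N :=
  proj1_sig (constructive_indefinite_description _ (decomposition m)).

Lemma proj_spec m : exists k, K k /\ m = i (proj m) + k.
Proof. by rewrite /proj; case: constructive_indefinite_description. Qed.

Lemma proj_eq m n k : K k -> m = i n + k -> proj m = n.
Proof.
move=> Kk E; have [k' [Kk' E']] := proj_spec m.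
by apply: (decomposition_unique _ _ _ _ Kk' Kk); rewrite -E' -E.
Qed.

Lemma projK : cancel i proj.
Proof. by move=> n; apply: (proj_eq _ _ 0); [case: K_submodule | rewrite addr0]. Qed.

Lemma proj_linear : linear proj.
Proof.
have [_ KD KZ] := K_submodule.
move=> a u v; have [ku [Ku Eu]] := proj_spec u; have [kv [Kv Ev]] := proj_spec v.
apply: (proj_eq _ _ (a *: ku + kv)); first by apply: KD => //; apply: KZ.
by rewrite i_linear {1}Eu {1}Ev scalerDr addrACA.
Qed.

Definition lift_endo (g : N -> N) (m : M) : M := i (g (proj m)).

Definition compress_endo (phi : M -> M) (n : N) : N := proj (phi (i n)).

Lemma lift_endoE g n : lift_endo g (i n) = i (g n).
Proof. by rewrite /lift_endo projK. Qed.

Lemma lift_endo_endo g : endo g -> endo (lift_endo g).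
Proof. by move=> hg; do 2?apply: linear_comp => //; apply: proj_linear. Qed.

Lemma compress_endo_endo phi : endo phi -> endo (compress_endo phi).
Proof. by move=> hphi; do 2?apply: linear_comp => //; apply: proj_linear. Qed.

Lemma compress_endo_central Z : central_endo Z -> central_endo (compress_endo Z).
Proof.
move=> [hZ Z_comm]; split; first exact: compress_endo_endo.
move=> g hg n; rewrite /compress_endo -lift_endoE.
by rewrite Z_comm; [rewrite /lift_endo projK | apply: lift_endo_endo].
Qed.

Definition fi_core (L : N -> Prop) (m : M) : Prop :=
  forall phi : M -> M, endo phi -> L (proj (phi m)).

Lemma fi_core_fully_invariant L : submodule L -> fully_invariant (fi_core L).
Proof.
move=> [L0 LD LZ]; split; first split.
- by move=> phi hphi; rewrite !linear_fun0 //; apply: proj_linear.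
- move=> x y hx hy phi hphi.
  rewrite !linear_funD //; last exact: proj_linear.
  by apply: LD; [apply: hx | apply: hy].
- move=> a x hx phi hphi.
  by rewrite !linear_funZ //; [apply: LZ; apply: hx | apply: proj_linear].
- by move=> f hf x hx phi hphi; apply: (hx (fun m => phi (f m))); apply: linear_comp.
Qed.

Lemma fi_core_proj L m : fi_core L m -> L (proj m).
Proof. by apply; move=> ? ? ?. Qed.

Lemma fi_core_i L n : fully_invariant L -> L n -> fi_core L (i n).
Proof.
move=> [_ L_inv] Ln phi hphi.
by apply: (L_inv (compress_endo phi)) => //; apply: compress_endo_endo.
Qed.

Lemma lS_fi_core_s_unital L :
  fully_invariant L -> centrally_s_unital (lS (fi_core L)) ->
  centrally_s_unital (lS L).
Proof.
move=> hL hsu a [ha a0].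
have lift_a : lS (fi_core L) (lift_endo a).
  split; first exact: lift_endo_endo.
  by move=> m /fi_core_proj Lm; rewrite /lift_endo a0 // linear_fun0.
have [Z [[hZ Z0] Zc aZ]] := hsu _ lift_a.
exists (compress_endo Z); split.
- split=> [|n Ln]; first exact: compress_endo_endo.
  by rewrite /compress_endo Z0 ?linear_fun0 //; [apply: proj_linear | apply: fi_core_i].
- exact: compress_endo_central.
- by move=> n; apply: i_inj; have := aZ (i n); rewrite !lift_endoE.
Qed.

End DirectSummand.

Theorem proposition2p6 (R : nzRingType) (M N : lmodType R^c)
    (i : N -> M) (K : M -> Prop) :
  linear i -> injective i -> submodule K ->
  (forall n, K (i n) -> i n = 0) ->
  (forall m : M, exists n k, K k /\ m = i n + k) ->
  centrally_endo_AIP M -> centrally_endo_AIP N.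
Proof.
move=> hi hinj hK hKi hdec hM L hL; split; first exact: lS_endo_ideal.
apply: lS_fi_core_s_unital => //; apply: (proj2 (hM _ _)).
by apply: fi_core_fully_invariant => //; case: hL.
Qed.
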